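(* Let $q=2^n$. For all $c\in{\mathbb F}_q$, $$\prod_{a\in\mathcal T_0}(c+a)+\prod_{b\in\mathcal T_1}(c+b)=c^{1/2}.$$
   Context: For $j\in\{0,1\}$, $\mathcal T_j=\{a\in{\mathbb F}_q^\times:\mathrm{Tr}_{{\mathbb F}_q/{\mathbb F}_2}(1/a)=j\}$. Here $c^{1/2}$ denotes the unique square root of $c$ in ${\mathbb F}_q$. *)

From HB Require Import structures.
From mathcomp Require Import all_boot all_order all_algebra all_field.
Set Implicit Arguments. Unset Strict Implicit. Unset Printing Implicit Defensive.
Import GRing.Theory.
Local Open Scope ring_scope.

Definition absTr (F : finFieldType) (n : nat) (x : F) : F :=
  \sum_(i < n) x ^+ (2 ^ i).

Definition Tset (F : finFieldType) (n : nat) (j : bool) : pred F :=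
  [pred a : F | (a != 0) && (absTr n a^-1 == (j : nat)%:R)].

From HB Require Import structures.
From mathcomp Require Import all_boot all_order all_algebra all_field.
From mathcomp Require Import zify ring.
Set Implicit Arguments. Unset Strict Implicit.
Import GRing.Theory.
Local Open Scope ring_scope.

(* Let q = 2^n and Tr = Tr_{F_q/F_2}, so that Tr x^2 = Tr x.  Every element of
   F_q is then a root of Tr(X) or of Tr(X) + 1, both monic of degree q/2, so
   each of them has exactly q/2 roots and splits over F_q.  Hence
   prod_{a != 0, Tr a = 0} (x + a) = Tr(x)/x  and  prod_{Tr a = 1} (x + a) = Tr(x) + 1.
   Substituting a -> 1/a and x = 1/c, the two products of the statement become
   c^(q/2) Tr(1/c)  and  c^(q/2) (Tr(1/c) + 1), whose sum is c^(q/2), the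
   square root of c. *)

Lemma size_sum_polyXn_leq (R : nzRingType) k (f : nat -> nat) m :
  (forall i, (i < k)%N -> (f i < m)%N) ->
  (size (\sum_(i < k) 'X^(f i) : {poly R})%R <= m)%N.
Proof.
move=> fm; apply: leq_trans (size_sum _ _ _) _.
by apply/bigmax_leqP_seq => i _ _; rewrite size_polyXn; apply: fm.
Qed.

Section SumIncreasingMonomials.
Variables (R : nzRingType) (k : nat) (f : nat -> nat).
Hypothesis f_lt_last : forall i, (i < k)%N -> (f i < f k)%N.

Let sum_polyXn_recr :
  \sum_(i < k.+1) 'X^(f i) = 'X^(f k) + \sum_(i < k) 'X^(f i) :> {poly R}.
Proof. by rewrite big_ord_recr addrC. Qed.

Let size_sum_polyXn_lt :
  (size (\sum_(i < k) 'X^(f i) : {poly R})%R < size ('X^(f k) : {poly R})%R)%N.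
Proof. by rewrite size_polyXn ltnS; apply: size_sum_polyXn_leq. Qed.

Lemma size_sum_polyXn : size (\sum_(i < k.+1) 'X^(f i) : {poly R}) = (f k).+1.
Proof. by rewrite sum_polyXn_recr size_polyDl // size_polyXn. Qed.

Lemma monic_sum_polyXn : (\sum_(i < k.+1) 'X^(f i) : {poly R}) \is monic.
Proof. by rewrite sum_polyXn_recr monicE lead_coefDl // lead_coefXn. Qed.

End SumIncreasingMonomials.

Lemma card_roots_lt_size (R : finIdomainType) (p : {poly R}) (S : {pred R}) :
  p != 0 -> {in S, forall y, root p y} -> (#|S| < size p)%N.
Proof.
move=> p_neq0 pS; rewrite cardE; apply: max_poly_roots => //; last exact: enum_uniq.
by apply/allP => y; rewrite mem_enum; apply: pS.
Qed.

Lemma horner_monic_roots (R : finFieldType) (p : {poly R}) (S : {pred R}) :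
  p \is monic -> size p = #|S|.+1 -> {in S, forall y, root p y} ->
  forall x, p.[x] = \prod_(y in S) (x - y).
Proof.
move=> /monicP p_monic p_size pS x.
have pS' : all (root p) (enum S) by apply/allP => y; rewrite mem_enum; apply: pS.
rewrite cardE in p_size.
have S_uniq : uniq_roots (enum S) by rewrite uniq_rootsE enum_uniq.
rewrite (all_roots_prod_XsubC p_size pS' S_uniq).
rewrite p_monic scale1r horner_prod big_enum /=.
by apply: eq_bigr => y _; rewrite hornerXsubC.
Qed.

(* [c + 1/y = (c/y) (1/c + y)] and [\prod_(y in S) y = Q 0]. *)
Lemma prod_addV (F : finFieldType) (S : {pred F}) (Q : F -> F) (c : F) :
  {in S, forall y, y != 0} -> (forall x, \prod_(y in S) (x + y) = Q x) -> Q 0 = 1 ->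
  \prod_(y in S) (c + y^-1) = if c == 0 then 1 else c ^+ #|S| * Q c^-1.
Proof.
move=> S_neq0 prodQ Q0.
have prodS : \prod_(y in S) y = 1.
  by rewrite -[RHS]Q0 -prodQ; apply: eq_bigr => y _; rewrite add0r.
have [->|c_neq0] := eqVneq c 0.
  by under eq_bigr do rewrite add0r; rewrite prodfV prodS invr1.
rewrite (eq_bigr (fun y => c * y^-1 * (c^-1 + y))); last first.
  by move=> y /S_neq0 y_neq0; field; apply/andP.
by rewrite !big_split /= prodr_const prodfV prodS invr1 mulr1 prodQ.
Qed.

Lemma absTr0 (F : finFieldType) n : absTr n (0 : F) = 0.
Proof. by rewrite /absTr big1 // => i _; rewrite expr0n expn_eq0. Qed.

Section AbsoluteTraceInCharacteristicTwo.
Variables (F : finFieldType) (k : nat).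
Hypothesis cardF : #|F| = (2 ^ k.+1)%N.
Local Notation Tr := (@absTr F k.+1).
Local Notation trace0 := [pred y : F | Tr y == 0].
Local Notation trace1 := [pred y : F | Tr y == 1].
Local Notation trace0_neq0 := [pred y : F | (y != 0) && (Tr y == 0)].

Definition trace_poly : {poly F} := \sum_(i < k.+1) 'X^(2 ^ i).
Definition trace_quot : {poly F} := \sum_(i < k.+1) 'X^(2 ^ i - 1).

Lemma pchar_F : (2 \in [pchar F])%N.
Proof. exact: card_finPcharP cardF _. Qed.

Lemma horner_trace_poly x : trace_poly.[x] = Tr x.
Proof. by rewrite horner_sum; apply: eq_bigr => i _; rewrite hornerXn. Qed.

Lemma mulX_trace_quot : 'X * trace_quot = trace_poly.
Proof.
rewrite mulr_sumr; apply: eq_bigr => i _.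
by rewrite -exprS subn1 prednK // expn_gt0.
Qed.

Lemma horner_trace_quot0 : trace_quot.[0] = 1.
Proof.
rewrite horner_sum big_ord_recl big1 ?addr0 ?hornerXn ?expr0 // => i _.
by rewrite hornerXn expr0n /= subn_eq0 -(expn0 2) leq_exp2l.
Qed.

Lemma size_trace_poly : size trace_poly = (2 ^ k).+1.
Proof. by apply: size_sum_polyXn => i; rewrite ltn_exp2l. Qed.

Lemma monic_trace_poly : trace_poly \is monic.
Proof. by apply: monic_sum_polyXn => i; rewrite ltn_exp2l. Qed.

Lemma size_trace_poly1 : size (trace_poly + 1) = (2 ^ k).+1.
Proof. by rewrite size_polyDl size_trace_poly // size_poly1 ltnS expn_gt0. Qed.

Lemma monic_trace_poly1 : trace_poly + 1 \is monic.
Proof.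
rewrite monicE lead_coefDl ?(monicP monic_trace_poly) //.
by rewrite size_poly1 size_trace_poly ltnS expn_gt0.
Qed.

Let lt_pow2_pred i : (i < k)%N -> (2 ^ i - 1 < 2 ^ k - 1)%N.
Proof.
move=> ik; have : (2 ^ i < 2 ^ k)%N by rewrite ltn_exp2l.
have : (0 < 2 ^ i)%N by rewrite expn_gt0.
lia.
Qed.

Lemma size_trace_quot : size trace_quot = (2 ^ k - 1).+1.
Proof. exact: size_sum_polyXn lt_pow2_pred. Qed.

Lemma monic_trace_quot : trace_quot \is monic.
Proof. exact: monic_sum_polyXn lt_pow2_pred. Qed.

Lemma absTr_sqr x : Tr x ^+ 2 = Tr x.
Proof.
rewrite /absTr -(pFrobenius_autE pchar_F) rmorph_sum /=.
under eq_bigr do rewrite pFrobenius_autE -exprM -expnSr.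
by rewrite big_ord_recr /= -cardF expf_card [RHS]big_ord_recl /= expn0 expr1 addrC.
Qed.

Lemma absTr_eq1 x : (Tr x == 1) = (Tr x != 0).
Proof.
have : Tr x * (Tr x - 1) == 0 by rewrite mulrBr mulr1 -expr2 absTr_sqr subrr.
rewrite mulf_eq0 subr_eq0; case/orP=> /eqP ->; rewrite ?eqxx ?oner_eq0 //.
by rewrite eq_sym oner_eq0.
Qed.

Lemma card_absTr01 : (#|trace0| + #|trace1| = 2 ^ k.+1)%N.
Proof.
rewrite -cardF -(cardC trace0); congr (_ + _)%N.
by apply: eq_card => y; rewrite !inE absTr_eq1.
Qed.

Let card_absTr0_leq : (#|trace0| <= 2 ^ k)%N.
Proof.
rewrite -ltnS -size_trace_poly; apply: card_roots_lt_size.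
  by rewrite -size_poly_eq0 size_trace_poly.
by move=> y /eqP Try0; rewrite rootE horner_trace_poly Try0.
Qed.

Let card_absTr1_leq : (#|trace1| <= 2 ^ k)%N.
Proof.
rewrite -ltnS -size_trace_poly1; apply: card_roots_lt_size.
  by rewrite -size_poly_eq0 size_trace_poly1.
move=> y /eqP Try1.
by rewrite rootE hornerD hornerC horner_trace_poly Try1 (addrr_pchar2 pchar_F).
Qed.

Lemma card_absTr0 : #|trace0| = (2 ^ k)%N.
Proof. by move: card_absTr01; rewrite expnS mul2n -addnn; lia. Qed.

Lemma card_absTr1 : #|trace1| = (2 ^ k)%N.
Proof. by move: card_absTr01; rewrite expnS mul2n -addnn; lia. Qed.

Lemma card_absTr0_neq0 : #|trace0_neq0| = (2 ^ k - 1)%N.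
Proof.
rewrite -card_absTr0 [in RHS](cardD1 0) inE /= absTr0 eqxx add1n subn1 /=.
by apply: eq_card => y; rewrite !inE.
Qed.

Lemma prod_absTr0 x :
  \prod_(y in trace0_neq0) (x + y) = trace_quot.[x].
Proof.
rewrite (horner_monic_roots (S := trace0_neq0) monic_trace_quot); last first.
- move=> y /andP[y_neq0 /eqP Try0]; rewrite rootE.
  have := congr1 (horner^~ y) mulX_trace_quot.
  by rewrite hornerM hornerX horner_trace_poly Try0 => /eqP; rewrite mulf_eq0 (negbTE y_neq0).
- by rewrite size_trace_quot card_absTr0_neq0.
by apply: eq_bigr => y _; rewrite (GRing.subr_pchar2 pchar_F).
Qed.

Lemma prod_absTr1 x : \prod_(y in trace1) (x + y) = Tr x + 1.
Proof.
have -> : Tr x + 1 = (trace_poly + 1).[x] by rewrite hornerD hornerC horner_trace_poly.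
rewrite (horner_monic_roots (S := trace1) monic_trace_poly1).
- by apply: eq_bigr => y _; rewrite (GRing.subr_pchar2 pchar_F).
- by rewrite size_trace_poly1 card_absTr1.
move=> y /eqP Try1.
by rewrite rootE hornerD hornerC horner_trace_poly Try1 (addrr_pchar2 pchar_F).
Qed.

Lemma prod_Tset0 c :
  \prod_(a : F | a \in Tset k.+1 false) (c + a) =
    if c == 0 then 1 else c ^+ (2 ^ k) * Tr c^-1.
Proof.
rewrite (reindex_inj invr_inj) /=.
rewrite (eq_bigl trace0_neq0); last first.
  by move=> y; rewrite !inE invr_eq0 invrK.
have trace0_neq0_neq0 : {in trace0_neq0, forall y, y != 0} by move=> y /andP[].
rewrite (prod_addV c trace0_neq0_neq0 prod_absTr0 horner_trace_quot0) card_absTr0_neq0.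
have [//|c_neq0] := eqVneq c 0.
have -> : Tr c^-1 = c^-1 * trace_quot.[c^-1].
  by rewrite -horner_trace_poly -mulX_trace_quot hornerM hornerX.
by rewrite mulrA -(prednK (expn_gt0 2 k)) exprSr mulrK ?unitfE // subn1.
Qed.

Lemma prod_Tset1 c :
  \prod_(a : F | a \in Tset k.+1 true) (c + a) =
    if c == 0 then 1 else c ^+ (2 ^ k) * (Tr c^-1 + 1).
Proof.
rewrite (reindex_inj invr_inj) /=.
rewrite (eq_bigl trace1); last first.
  move=> y; rewrite !inE invr_eq0 invrK /=.
  by have [->|] := eqVneq y 0; rewrite // absTr0 eq_sym oner_eq0.
have trace1_neq0 : {in trace1, forall y, y != 0}.
  by move=> y; apply: contraTneq => ->; rewrite inE absTr0 eq_sym oner_eq0.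
have trace1_0 : Tr 0 + 1 = 1 by rewrite absTr0 add0r.
by rewrite (prod_addV c trace1_neq0 prod_absTr1 trace1_0) card_absTr1.
Qed.

Lemma sqr_expr_half_card (s : F) : (s ^+ 2) ^+ (2 ^ k) = s.
Proof. by rewrite -exprM -expnS -cardF expf_card. Qed.

End AbsoluteTraceInCharacteristicTwo.

Unset Implicit Arguments.

Theorem theorem7p8 (F : finFieldType) (n : nat) (hq : #|F| = (2 ^ n)%N)
  (c s : F) (hs : s ^+ 2 = c) :
  \prod_(a : F | a \in Tset n false) (c + a)
    + \prod_(b : F | b \in Tset n true) (c + b) = s.
Proof.
case: n hq => [|k] cardF.
  have : (1 < #|F|)%N by apply/card_gt1P; exists 0, 1; rewrite !inE eq_sym oner_eq0.
  by rewrite cardF.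
rewrite (prod_Tset0 cardF) (prod_Tset1 cardF) -(sqr_expr_half_card cardF s) hs.
have [c0|c_neq0] := eqVneq c 0.
  by rewrite (addrr_pchar2 (pchar_F cardF)) c0 expr0n expn_eq0.
by rewrite mulrDr mulr1 addrA (addrr_pchar2 (pchar_F cardF)) add0r.
Qed.
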